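(* Let $L$ be an interval locale. If $F$ is a presheaf of monomorphisms on $L_{+}$, then $LF$ is a sheaf of monomorphisms on $L_{+}$. Consequently the associated sheaf functor $L^2:\mathbf{Pre}(L_{+})\to\mathbf{Shv}(L_{+})$ restricts to a functor $\mathbf{Mon}_p(L_{+})\to\mathbf{Mon}(L_{+})$ (which agrees with $L$ on these objects).
   Context: A locale $L$ is a complete lattice in which finite meets distribute over arbitrary joins, with Grothendieck topology: $\{b_j\le a\}$ covers $a$ iff $\bigvee_j b_j=a$; sheaves are presheaves $F$ with $F(a)\to\varprojlim_{b\in R}F(b)$ bijective for all covering sieves $R$. $L$ is an interval if it is totally ordered and densely ordered ($a<b$ implies there is $s$ with $a<s<b$). $i$ is the bottom element of $L$; $L_{+}=L\sqcup\{0\}$ with a new bottom $0<i$. A presheaf of monomorphisms on $L_{+}$ is a functor $F:(L_{+})^{op}\to\mathbf{Set}$ with $F(0)=\ast$ and $F(b)\to F(a)$ injective for all $a\le b$ in $L$; these form $\mathbf{Mon}_p(L_{+})$. A sheaf of monomorphisms is a sheaf with this property; they form $\mathbf{Mon}(L_{+})$. For a presheaf $F$ on $L_{+}$, $LF(a)=\varprojlim_{0<b<a}F(b)$ for $a\in L$, $a\ne i$, $LF(i)=F(i)$, $LF(0)=\ast$. *)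

From Stdlib Require Import ClassicalEpsilon.

Definition is_lub {P : Type} (le : P -> P -> Prop) (S : P -> Prop) (a : P) : Prop :=
  (forall b, S b -> le b a) /\ (forall c, (forall b, S b -> le b c) -> le a c).

Definition is_meet {P : Type} (le : P -> P -> Prop) (a b m : P) : Prop :=
  le m a /\ le m b /\ (forall c, le c a -> le c b -> le c m).

Record locale : Type := Locale {
  lcar :> Type;
  lle : lcar -> lcar -> Prop;
  lle_refl : forall a, lle a a;
  lle_trans : forall a b c, lle a b -> lle b c -> lle a c;
  lle_antisym : forall a b, lle a b -> lle b a -> a = b;
  lsup_ex : forall S : lcar -> Prop, exists s, is_lub lle S s;
  lmeet_ex : forall a b, exists m, is_meet lle a b m;
  ldistr : forall (a : lcar) (S : lcar -> Prop) (s m : lcar),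
      is_lub lle S s -> is_meet lle a s m ->
      is_lub lle (fun c => exists b, S b /\ is_meet lle a b c) m }.

Arguments lle {l} _ _.
Arguments lle_refl {l} _.
Arguments lle_trans {l} _ _ _ _ _.
Arguments lle_antisym {l} _ _ _ _.

Definition llt {L : locale} (a b : L) : Prop := lle a b /\ a <> b.

Definition is_interval (L : locale) : Prop :=
  (forall a b : L, lle a b \/ lle b a) /\
  (forall a b : L, llt a b -> exists s, llt a s /\ llt s b).

(* order on L_+ = option L, with None the new bottom 0 *)
Definition lep {L : locale} (x y : option L) : Prop :=
  match x, y with
  | None, _ => True
  | Some _, None => False
  | Some a, Some b => lle a b
  end.

Record psh_data (P : Type) (le : P -> P -> Prop) : Type := PshData {
  ob : P -> Type;
  res : forall x y, le x y -> ob y -> ob x }.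
Arguments PshData {P le} _ _.
Arguments ob {P le} _ _.
Arguments res {P le} _ x y _ _.

Definition is_presheaf {P : Type} {le : P -> P -> Prop} (G : psh_data P le) : Prop :=
  (forall x (h : le x x) t, res G x x h t = t) /\
  (forall x y z (hxy : le x y) (hyz : le y z) (hxz : le x z) t,
      res G x y hxy (res G y z hyz t) = res G x z hxz t).

Definition Psh (L : locale) : Type := psh_data (option L) lep.

Definition is_mon {L : locale} (G : Psh L) : Prop :=
  (exists t0 : ob G None, forall t, t = t0) /\
  (forall (a b : L) (h : lle a b) (u v : ob G (Some b)),
      res G (Some a) (Some b) h u = res G (Some a) (Some b) h v -> u = v).

Definition is_covering_sieve {L : locale} (x : option L) (R : option L -> Prop) : Prop :=
  (forall y, R y -> lep y x) /\ (forall y z, R z -> lep y z -> R y) /\ is_lub lep R x.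

(* elements of lim_{y in R} G(y) *)
Definition is_matching {L : locale} (G : Psh L) (R : option L -> Prop)
  (s : forall y, R y -> ob G y) : Prop :=
  forall y z (hy : R y) (hz : R z) (h : lep y z), res G y z h (s z hz) = s y hy.

Definition is_sheaf {L : locale} (G : Psh L) : Prop :=
  forall x R, is_covering_sieve x R ->
  forall s, is_matching G R s ->
  exists! t : ob G x, forall y (hy : R y) (hyx : lep y x), res G y x hyx t = s y hy.

Definition is_mon_presheaf {L : locale} (G : Psh L) : Prop := is_presheaf G /\ is_mon G.
Definition is_mon_sheaf {L : locale} (G : Psh L) : Prop :=
  is_presheaf G /\ is_sheaf G /\ is_mon G.

Definition psh_iso {L : locale} (G H : Psh L) : Prop :=
  exists phi : forall x, ob G x -> ob H x,
    (forall x, (forall u v, phi x u = phi x v -> u = v) /\ (forall w, exists u, phi x u = w)) /\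
    (forall x y (h : lep x y) t, phi x (res G x y h t) = res H x y h (phi y t)).

(* lim_{0 < b < a} G(b) : compatible families over {c : L | c < a} *)
Definition Fam {L : locale} (G : Psh L) (a : L) : Type :=
  { s : forall c : L, llt c a -> ob G (Some c) |
    forall c c' (hc : llt c a) (hc' : llt c' a) (h : lle c c'),
      res G (Some c) (Some c') h (s c' hc') = s c hc }.

Definition em (P : Prop) : {P} + {~ P} := excluded_middle_informative P.

Definition LFob {L : locale} (i : L) (G : Psh L) (x : option L) : Type :=
  match x with
  | None => unit
  | Some a => if em (a = i) then ob G (Some a) else Fam G a
  end.

Lemma llt_lle_trans {L : locale} {c a b : L} : llt c a -> lle a b -> llt c b.
Proof.
  intros [h1 h2] h. split.
  - exact (lle_trans _ _ _ h1 h).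
  - intro e. subst. apply h2. apply lle_antisym; assumption.
Qed.

Lemma eq_neq_llt {L : locale} {i a b : L} : a = i -> b <> i -> lle a b -> llt a b.
Proof. intros e n h. split; [exact h|]. intro e'. subst. apply n; reflexivity. Qed.

Lemma bot_absurd {L : locale} {i a b : L} (Hi : forall a : L, lle i a) :
  a <> i -> b = i -> lle a b -> False.
Proof. intros n e h. subst. apply n. apply lle_antisym; auto. Qed.

Definition fam_restr {L : locale} (G : Psh L) {a b : L} (h : lle a b) (s : Fam G b) : Fam G a :=
  exist (fun t : forall c : L, llt c a -> ob G (Some c) =>
           forall c c' (hc : llt c a) (hc' : llt c' a) (h : lle c c'),
             res G (Some c) (Some c') h (t c' hc') = t c hc)
        (fun c hc => proj1_sig s c (llt_lle_trans hc h))
        (fun c c' hc hc' hcc' =>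
           proj2_sig s c c' (llt_lle_trans hc h) (llt_lle_trans hc' h) hcc').

Definition LFres_SS {L : locale} (i : L) (Hi : forall a : L, lle i a) (G : Psh L)
  (a b : L) (h : lle a b) (da : {a = i} + {a <> i}) (db : {b = i} + {b <> i}) :
  (if db then ob G (Some b) else Fam G b) -> (if da then ob G (Some a) else Fam G a) :=
  match da as da0, db as db0
    return ((if db0 then ob G (Some b) else Fam G b) -> (if da0 then ob G (Some a) else Fam G a))
  with
  | left _, left _ => fun y => res G (Some a) (Some b) h y
  | left ea, right nb => fun s => proj1_sig s a (eq_neq_llt ea nb h)
  | right na, left eb => fun _ => False_rect _ (bot_absurd Hi na eb h)
  | right _, right _ => fun s => fam_restr G h s
  end.

Definition LFres {L : locale} (i : L) (Hi : forall a : L, lle i a) (G : Psh L)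
  (x y : option L) : lep x y -> LFob i G y -> LFob i G x :=
  match x as x0, y as y0 return lep x0 y0 -> LFob i G y0 -> LFob i G x0 with
  | None, _ => fun _ _ => tt
  | Some a, None => fun h _ => False_rect _ h
  | Some a, Some b => fun h => LFres_SS i Hi G a b h (em (a = i)) (em (b = i))
  end.

Definition LF {L : locale} (i : L) (Hi : forall a : L, lle i a) (G : Psh L) : Psh L :=
  PshData (LFob i G) (LFres i Hi G).

(* Write 0 < i for the two bottom elements of L_+.  For a presheaf G, LG agrees
   with G at 0 and i, and at a > i it is the set of compatible families of
   sections of G over the open interval (0, a) = {c in L | c < a}.

   1. LG is again a presheaf, and if the restrictions of G are injective so are
      those of LG: a family over (0, a) is determined by its value at i.
   2. Sheaf property.  In an interval a covering sieve of a either contains a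
      or, when a > i, contains every c < a (totality).  In the second case a
      matching family is glued by reading its value at c off any member d with
      c < d < a (density); totality makes this independent of d.
   3. If G is already a sheaf of monomorphisms, restriction of sections
      G(a) -> LG(a) is a natural bijection, since {0} u (0, a) covers a
      (density again); inverting it gives LG ~ G. *)

From Stdlib Require Import ClassicalEpsilon ProofIrrelevance FunctionalExtensionality Classical.

Lemma lle_llt_trans {L : locale} (c c' d : L) : lle c c' -> llt c' d -> llt c d.
Proof.
  intros h [h1 h2]. split; [exact (lle_trans _ _ _ h h1)|].
  intro e. subst. apply h2. apply lle_antisym; assumption.
Qed.

Lemma psh_iso_inverse {L : locale} (G H : Psh L) (f : forall x, ob G x -> ob H x) :
  (forall x, (forall u v, f x u = f x v -> u = v) /\ (forall w, exists u, f x u = w)) ->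
  (forall x y (h : lep x y) t, f x (res G x y h t) = res H x y h (f y t)) ->
  psh_iso H G.
Proof.
  intros Hbij Hnat.
  pose (g := fun x w => proj1_sig (constructive_indefinite_description _ (proj2 (Hbij x) w))).
  assert (fg : forall x w, f x (g x w) = w)
    by (intros x w; unfold g; destruct (constructive_indefinite_description _ _); assumption).
  exists g. split.
  - intro x. split.
    + intros u v E. rewrite <- (fg x u), <- (fg x v), E. reflexivity.
    + intro w. exists (f x w). apply (proj1 (Hbij x)). apply fg.
  - intros x y h t. apply (proj1 (Hbij x)). rewrite Hnat, !fg. reflexivity.
Qed.

Section PlusConstruction.

Variable L : locale.
Variable i : L.
Hypothesis Hi : forall a : L, lle i a.

Lemma below_bottom (a : L) : lle a i -> a = i.
Proof. intro h. apply lle_antisym; auto. Qed.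

Lemma llt_not_bottom (c d : L) : llt c d -> d <> i.
Proof. intros [h1 h2] e. subst. apply h2, below_bottom, h1. Qed.

Lemma bottom_llt (d : L) : d <> i -> llt i d.
Proof. intro n. split; auto. Qed.

Variable G : Psh L.

Definition toF : LFob i G (Some i) -> ob G (Some i) :=
  match em (i = i) as e return (if e then ob G (Some i) else Fam G i) -> ob G (Some i) with
  | left _ => fun s => s
  | right n => fun _ => False_rect _ (n eq_refl) end.

Definition toFam (d : L) (n : d <> i) : LFob i G (Some d) -> Fam G d :=
  match em (d = i) as e return (if e then ob G (Some d) else Fam G d) -> Fam G d with
  | left e => fun _ => False_rect _ (n e)
  | right _ => fun s => s end.

Definition ofFam (d : L) (n : d <> i) : Fam G d -> LFob i G (Some d) :=
  match em (d = i) as e return Fam G d -> (if e then ob G (Some d) else Fam G d) with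
  | left e => fun _ => False_rect _ (n e)
  | right _ => fun s => s end.

Lemma toF_inj x y : toF x = toF y -> x = y.
Proof. unfold toF. revert x y. cbn [LFob]. destruct (em (i = i)); [auto|contradiction]. Qed.

Lemma toFam_inj d n x y : toFam d n x = toFam d n y -> x = y.
Proof. unfold toFam. revert x y. cbn [LFob]. destruct (em (d = i)); [contradiction|auto]. Qed.

Lemma toFam_ofFam d n n' s : toFam d n (ofFam d n' s) = s.
Proof. unfold toFam, ofFam. destruct (em (d = i)); [contradiction|reflexivity]. Qed.

Lemma toFam_pi d n n' x : toFam d n x = toFam d n' x.
Proof. f_equal. apply proof_irrelevance. Qed.

Lemma res_ii (h : lle i i) x :
  toF (res (LF i Hi G) (Some i) (Some i) h x) = res G (Some i) (Some i) h (toF x).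
Proof.
  revert x. cbn [LF ob res LFres LFob]. unfold toF, LFres_SS.
  destruct (em (i = i)); [reflexivity|contradiction].
Qed.

Lemma res_iF b (h : lle i b) nb x :
  toF (res (LF i Hi G) (Some i) (Some b) h x)
  = proj1_sig (toFam b nb x) i (eq_neq_llt eq_refl nb h).
Proof.
  revert x. cbn [LF ob res LFres LFob]. unfold toFam, toF, LFres_SS.
  destruct (em (b = i)); [contradiction|]. destruct (em (i = i)); [|contradiction].
  intro x. f_equal. apply proof_irrelevance.
Qed.

Lemma res_FF a b (h : lle a b) na nb x :
  toFam a na (res (LF i Hi G) (Some a) (Some b) h x) = fam_restr G h (toFam b nb x).
Proof.
  revert x. cbn [LF ob res LFres LFob]. unfold toFam, LFres_SS.
  destruct (em (b = i)); [contradiction|]. destruct (em (a = i)); [contradiction|].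
  reflexivity.
Qed.

Lemma Fam_eq a (s t : Fam G a) :
  (forall c hc, proj1_sig s c hc = proj1_sig t c hc) -> s = t.
Proof.
  destruct s as [s ps], t as [t pt]; simpl; intro H.
  assert (s = t) by (apply functional_extensionality_dep; intro c;
    apply functional_extensionality_dep; intro hc; apply H).
  subst. f_equal. apply proof_irrelevance.
Qed.

Lemma Fam_eq_bottom (HGm : is_mon G) b (s t : Fam G b) p p' :
  proj1_sig s i p = proj1_sig t i p' -> s = t.
Proof.
  intro H. apply Fam_eq. intros c hc. apply (proj2 HGm i c (Hi c)).
  rewrite (proj2_sig s i c p hc (Hi c)), (proj2_sig t i c p' hc (Hi c)). exact H.
Qed.

Lemma LF_presheaf (HGp : is_presheaf G) : is_presheaf (LF i Hi G).
Proof.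
  destruct HGp as [G_id G_comp]. split.
  - intros [a|] h t; [|destruct t; reflexivity]. simpl in h.
    destruct (em (a = i)) as [e|n].
    + subst a. apply toF_inj. rewrite res_ii. apply G_id.
    + apply (toFam_inj a n). rewrite (res_FF a a h n n).
      apply Fam_eq. intros c hc. simpl. f_equal. apply proof_irrelevance.
  - intros [a|] [b|] [c|] hab hbc hac t; simpl in hab, hbc, hac; try contradiction;
      try reflexivity.
    destruct (em (c = i)) as [ec|nc].
    { subst c. pose proof (below_bottom b hbc). subst b.
      pose proof (below_bottom a hab). subst a.
      apply toF_inj. rewrite !res_ii. apply G_comp. }
    destruct (em (b = i)) as [eb|nb].
    { subst b. pose proof (below_bottom a hab). subst a.
      apply toF_inj. rewrite res_ii, !(res_iF c _ nc). apply (proj2_sig (toFam c nc t)). }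
    destruct (em (a = i)) as [ea|na].
    { subst a. apply toF_inj. rewrite !(res_iF _ _ nb), (res_iF _ _ nc), (res_FF b c hbc nb nc).
      simpl. f_equal. apply proof_irrelevance. }
    apply (toFam_inj a na).
    rewrite (res_FF a b hab na nb), (res_FF b c hbc nb nc), (res_FF a c hac na nc).
    apply Fam_eq. intros d hd. simpl. f_equal. apply proof_irrelevance.
Qed.

Lemma LF_mon (HGm : is_mon G) : is_mon (LF i Hi G).
Proof.
  split; [exists tt; intros []; reflexivity|].
  intros a b h u v E.
  destruct (em (b = i)) as [eb|nb].
  { subst b. pose proof (below_bottom a h). subst a.
    apply toF_inj, (proj2 HGm i i h). apply (f_equal toF) in E. rewrite !res_ii in E. exact E. }
  apply (toFam_inj b nb).
  destruct (em (a = i)) as [ea|na].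
  { subst a. apply (f_equal toF) in E. rewrite !(res_iF b h nb) in E.
    exact (Fam_eq_bottom HGm b _ _ _ _ E). }
  apply (f_equal (toFam a na)) in E. rewrite !(res_FF a b h na nb) in E.
  apply (f_equal (fun s => proj1_sig s i (bottom_llt a na))) in E. simpl in E.
  exact (Fam_eq_bottom HGm b _ _ _ _ E).
Qed.

Lemma covering_sieve_cases (HL : is_interval L) a R :
  is_covering_sieve (Some a) R ->
  R (Some a) \/ (~ R (Some a) /\ a <> i /\ forall c, llt c a -> R (Some c)).
Proof.
  intros [Rle [Rdown [_ Rleast]]].
  destruct (classic (R (Some a))) as [Ha|Hna]; [now left|right].
  assert (Rbelow : forall c, llt c a -> R (Some c)).
  { intros c [hca nca]. apply NNPP. intro Hc. apply nca, lle_antisym; [exact hca|].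
    apply (Rleast (Some c)). intros [d|] hd; [|exact I]. simpl.
    destruct (proj1 HL d c) as [h|h]; [exact h|].
    exfalso. exact (Hc (Rdown (Some c) (Some d) hd h)). }
  repeat split; [exact Hna| |exact Rbelow].
  intro e. subst a. apply (Rleast None). intros [d|] hd; [|exact I].
  apply Hna. rewrite <- (below_bottom d (Rle _ hd)). exact hd.
Qed.

Section Gluing.

Hypothesis HL : is_interval L.
Variables (a : L) (na : a <> i) (R : option L -> Prop) (s : forall y, R y -> LFob i G y).
Hypothesis Hs : is_matching (LF i Hi G) R s.
Hypothesis Rbelow : forall c, llt c a -> R (Some c).

Definition value_through (c d : L) (hcd : llt c d) (hda : llt d a) : ob G (Some c) :=
  proj1_sig (toFam d (llt_not_bottom c d hcd) (s (Some d) (Rbelow d hda))) c hcd.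

(* Independence of d: first for comparable d <= d' (matching), then by totality. *)
Lemma value_through_mono c d d' hcd hda hcd' hda' :
  lle d d' -> value_through c d hcd hda = value_through c d' hcd' hda'.
Proof.
  intro h. unfold value_through.
  pose proof (Hs (Some d) (Some d') (Rbelow d hda) (Rbelow d' hda') h) as E.
  apply (f_equal (toFam d (llt_not_bottom c d hcd))) in E.
  rewrite (res_FF d d' h _ (llt_not_bottom c d' hcd')) in E.
  rewrite <- E. simpl. f_equal. apply proof_irrelevance.
Qed.

Lemma value_through_indep c d d' hcd hda hcd' hda' :
  value_through c d hcd hda = value_through c d' hcd' hda'.
Proof.
  destruct (proj1 HL d d') as [h|h];
    [|symmetry]; apply value_through_mono; exact h.
Qed.

Definition glued_value (c : L) (hc : llt c a) : ob G (Some c) :=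
  let D := constructive_indefinite_description _ (proj2 HL c a hc) in
  value_through c (proj1_sig D) (proj1 (proj2_sig D)) (proj2 (proj2_sig D)).

Lemma glued_value_through c hc d hcd hda : glued_value c hc = value_through c d hcd hda.
Proof. apply value_through_indep. Qed.

Lemma glued_value_compat c c' (hc : llt c a) (hc' : llt c' a) (h : lle c c') :
  res G (Some c) (Some c') h (glued_value c' hc') = glued_value c hc.
Proof.
  destruct (proj2 HL c' a hc') as [d [hcd hda]].
  pose proof (lle_llt_trans c c' d h hcd) as hcd'.
  rewrite (glued_value_through c' hc' d hcd hda), (glued_value_through c hc d hcd' hda).
  unfold value_through.
  rewrite (toFam_pi d (llt_not_bottom c' d hcd) (llt_not_bottom c d hcd')).
  apply (proj2_sig (toFam d _ _)).
Qed.

Definition glued : LFob i G (Some a) := ofFam a na (exist _ glued_value glued_value_compat).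

Lemma glued_restricts c (hc : llt c a) (hy : R (Some c)) :
  res (LF i Hi G) (Some c) (Some a) (proj1 hc) glued = s (Some c) hy.
Proof.
  unfold glued. destruct (em (c = i)) as [ec|nc].
  - subst c. apply toF_inj. rewrite (res_iF a _ na), toFam_ofFam. simpl.
    destruct (proj2 HL i a hc) as [d [hid hda]].
    rewrite (glued_value_through i _ d hid hda). unfold value_through.
    pose proof (Hs (Some i) (Some d) hy (Rbelow d hda) (proj1 hid)) as E.
    apply (f_equal toF) in E. rewrite (res_iF d _ (llt_not_bottom i d hid)) in E.
    rewrite <- E. f_equal. apply proof_irrelevance.
  - apply (toFam_inj c nc). rewrite (res_FF c a _ nc na), toFam_ofFam.
    apply Fam_eq. intros e he. simpl.
    rewrite (glued_value_through e _ c he hc). unfold value_through.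
    rewrite (proof_irrelevance _ hy (Rbelow c hc)), (toFam_pi c _ nc). reflexivity.
Qed.

End Gluing.

(* Step 2: either the sieve contains a (use s(a)), or glue over (0, a); uniqueness
   follows from injectivity of the restriction LG(a) -> LG(i). *)
Lemma LF_sheaf (HL : is_interval L) (HG : is_mon_presheaf G) : is_sheaf (LF i Hi G).
Proof.
  destruct HG as [HGp HGm].
  intros [a|] R cov s Hs.
  2:{ exists tt. split; [|intros [] _; reflexivity].
      intros [y|] hy hyx; [contradiction|destruct (s None hy); reflexivity]. }
  destruct (covering_sieve_cases HL a R cov) as [Ha|[Hna [na Rbelow]]].
  - exists (s (Some a) Ha). split; [intros y hy hyx; apply Hs|].
    intros t Ht. rewrite <- (Ht (Some a) Ha (lle_refl a)). apply (proj1 (LF_presheaf HGp)).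
  - exists (glued HL a na R s Hs Rbelow). split.
    + intros [c|] hy hyx; [|destruct (s None hy); reflexivity].
      assert (hc : llt c a) by (split; [exact hyx|intro e; subst c; contradiction]).
      replace hyx with (proj1 hc) by apply proof_irrelevance.
      apply glued_restricts; exact Hs.
    + intros t Ht. pose proof (bottom_llt a na) as hia.
      apply (proj2 (LF_mon HGm) i a (proj1 hia)).
      rewrite (Ht (Some i) (Rbelow i hia) (proj1 hia)). apply glued_restricts; exact Hs.
Qed.

Lemma restrict_compat (HGp : is_presheaf G) a (t : ob G (Some a)) c c'
  (hc : llt c a) (hc' : llt c' a) (h : lle c c') :
  res G (Some c) (Some c') h (res G (Some c') (Some a) (proj1 hc') t)
  = res G (Some c) (Some a) (proj1 hc) t.
Proof. apply (proj2 HGp). Qed.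

Definition restrict_fam (HGp : is_presheaf G) (a : L) (t : ob G (Some a)) : Fam G a :=
  exist _ (fun c hc => res G (Some c) (Some a) (proj1 hc) t) (restrict_compat HGp a t).

Definition to_LF (HGp : is_presheaf G) (x : option L) : ob G x -> LFob i G x :=
  match x as x0 return ob G x0 -> LFob i G x0 with
  | None => fun _ => tt
  | Some a => match em (a = i) as e
                return ob G (Some a) -> (if e then ob G (Some a) else Fam G a) with
              | left _ => fun t => t
              | right _ => fun t => restrict_fam HGp a t end
  end.

Lemma to_LF_bottom HGp t : toF (to_LF HGp (Some i) t) = t.
Proof. unfold toF, to_LF. destruct (em (i = i)); [reflexivity|contradiction]. Qed.

Lemma to_LF_fam HGp a n t : toFam a n (to_LF HGp (Some a) t) = restrict_fam HGp a t.
Proof. unfold toFam, to_LF. destruct (em (a = i)); [contradiction|reflexivity]. Qed.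

Lemma to_LF_natural HGp x y (h : lep x y) t :
  to_LF HGp x (res G x y h t) = res (LF i Hi G) x y h (to_LF HGp y t).
Proof.
  destruct x as [a|], y as [b|]; simpl in h; try contradiction; try reflexivity.
  destruct (em (b = i)) as [eb|nb].
  { subst b. pose proof (below_bottom a h). subst a.
    apply toF_inj. rewrite res_ii, !to_LF_bottom. reflexivity. }
  destruct (em (a = i)) as [ea|na].
  { subst a. apply toF_inj. rewrite (res_iF b h nb), to_LF_bottom, to_LF_fam.
    simpl. f_equal. apply proof_irrelevance. }
  apply (toFam_inj a na).
  rewrite (res_FF a b h na nb), !to_LF_fam. apply Fam_eq. intros c hc. simpl.
  apply (proj2 HGp).
Qed.

(* {0} u (0, a): by density its join is a, so it covers a. *)
Definition sieve_below (a : L) (y : option L) : Prop :=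
  match y with None => True | Some c => llt c a end.

Lemma sieve_below_covering (HL : is_interval L) a (na : a <> i) :
  is_covering_sieve (Some a) (sieve_below a).
Proof.
  split; [|split; [|split]].
  - intros [c|] hc; [exact (proj1 hc)|exact I].
  - intros [c|] [d|] hd h; simpl in *; try contradiction; try exact I.
    exact (lle_llt_trans c d a h hd).
  - intros [c|] hc; [exact (proj1 hc)|exact I].
  - intros [u|] Hu; [|exact (Hu (Some i) (bottom_llt a na))]. simpl.
    destruct (proj1 HL a u) as [h|h]; [exact h|].
    destruct (em (u = a)) as [e|ne]; [subst; apply lle_refl|].
    destruct (proj2 HL u a (conj h ne)) as [e [[hue nue] hea]].
    exfalso. apply nue, lle_antisym; [exact hue|exact (Hu (Some e) hea)].
Qed.

(* Injectivity: two sections over a with equal restriction to i coincide. *)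
Lemma to_LF_injective (HGp : is_presheaf G) (HGm : is_mon G) x u v :
  to_LF HGp x u = to_LF HGp x v -> u = v.
Proof.
  destruct x as [a|]; [|intros _; destruct (proj1 HGm) as [t0 Ht0]; now rewrite (Ht0 u), (Ht0 v)].
  intro E. destruct (em (a = i)) as [ea|na].
  - subst a. apply (f_equal toF) in E. rewrite !to_LF_bottom in E. exact E.
  - apply (f_equal (toFam a na)) in E. rewrite !to_LF_fam in E.
    apply (f_equal (fun s => proj1_sig s i (bottom_llt a na))) in E.
    exact (proj2 HGm i a _ u v E).
Qed.

(* A family over (0, a), extended by the point of G(0), matches on sieve_below a;
   the sheaf property of G glues it to a section over a. *)
Lemma to_LF_surjective (HL : is_interval L) (HGp : is_presheaf G) (HGs : is_sheaf G)
  (HGm : is_mon G) x w : exists u, to_LF HGp x u = w.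
Proof.
  destruct HGm as [[t0 Ht0] _].
  destruct x as [a|]; [|exists t0; destruct w; reflexivity].
  destruct (em (a = i)) as [ea|na].
  { subst a. exists (toF w). apply toF_inj. apply to_LF_bottom. }
  set (sw := toFam a na w).
  pose (s := fun y : option L => match y as y0 return sieve_below a y0 -> ob G y0 with
               | None => fun _ => t0 | Some c => fun hc => proj1_sig sw c hc end).
  assert (matching : is_matching G (sieve_below a) s).
  { intros [c|] [d|] hy hz h; simpl in h; try contradiction;
      [apply (proj2_sig sw)|transitivity t0; [apply Ht0|symmetry; apply Ht0]..]. }
  destruct (HGs (Some a) _ (sieve_below_covering HL a na) s matching) as [t [Ht _]].
  exists t. apply (toFam_inj a na). rewrite to_LF_fam. fold sw.
  apply Fam_eq. intros c hc. exact (Ht (Some c) hc (proj1 hc)).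
Qed.

Lemma LF_iso_of_mon_sheaf (HL : is_interval L) (HG : is_mon_sheaf G) :
  psh_iso (LF i Hi G) G.
Proof.
  destruct HG as [HGp [HGs HGm]].
  apply (psh_iso_inverse G (LF i Hi G) (to_LF HGp)).
  - intro x. split; [apply to_LF_injective, HGm|exact (to_LF_surjective HL HGp HGs HGm x)].
  - apply to_LF_natural.
Qed.

End PlusConstruction.

Lemma LF_mon_sheaf (L : locale) (HL : is_interval L) (i : L) (Hi : forall a : L, lle i a)
  (G : Psh L) (HG : is_mon_presheaf G) : is_mon_sheaf (LF i Hi G).
Proof.
  split; [|split].
  - exact (LF_presheaf L i Hi G (proj1 HG)).
  - exact (LF_sheaf L i Hi G HL HG).
  - exact (LF_mon L i Hi G (proj2 HG)).
Qed.

Theorem lemma22 (L : locale) (HL : is_interval L) (i : L) (Hi : forall a : L, lle i a)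
  (F : Psh L) (HF : is_mon_presheaf F) :
  is_mon_sheaf (LF i Hi F) /\
  is_mon_sheaf (LF i Hi (LF i Hi F)) /\
  psh_iso (LF i Hi (LF i Hi F)) (LF i Hi F).
Proof.
  pose proof (LF_mon_sheaf L HL i Hi F HF) as HLF.
  assert (HLLF : is_mon_sheaf (LF i Hi (LF i Hi F))).
  { apply LF_mon_sheaf; [exact HL|]. destruct HLF as [HP [_ HM]]. split; assumption. }
  split; [exact HLF|split; [exact HLLF|]].
  apply LF_iso_of_mon_sheaf; assumption.
Qed.
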